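(* Let $n\ge2$, let $z_1,\dots,z_n$ be indeterminates, and let $m_2\ge1$, $m_1\ge0$ be integers. Let $d=(d_1,\dots,d_{m_2+m_1-1})$ consist of $m_2-1$ entries equal to $2$ followed by $m_1$ entries equal to $1$. Then \[ M(m_2,m_1,n)=\sum_{1\le i<j\le n}\mathrm{monomial}_{\mathrm{inc}}(d,i,j;n)\,(z_i-z_j)^2 . \]
   Context: With $N=m_1+m_2+1$ and sums over all $N$-tuples $(b_1,\dots,b_N)$ of pairwise distinct elements of $\{1,\dots,n\}$, \[ M(m_2,m_1,n)=\sum_{b} z_{b_1}^2\cdots z_{b_{m_2}}^2\,z_{b_{m_2+1}}\cdots z_{b_{m_2+m_1}}\;-\;\sum_{b} z_{b_1}^2\cdots z_{b_{m_2-1}}^2\,z_{b_{m_2}}z_{b_{m_2+1}}\cdots z_{b_{m_2+m_1+1}}. \] For a sequence $d=(d_1,\dots,d_l)$ of nonnegative integers and distinct $i,j$, $\mathrm{monomial}_{\mathrm{inc}}(d,i,j;n)=\sum_{b}\prod_{h=1}^l z_{b_h}^{d_h}$, the sum over all $l$-tuples $b$ of pairwise distinct elements of $\{1,\dots,n\}\setminus\{i,j\}$ (empty product $=1$). *)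

From HB Require Import structures.
From mathcomp Require Import all_boot all_order all_algebra.
From mathcomp Require Import mpoly.
Set Implicit Arguments. Unset Strict Implicit. Unset Printing Implicit Defensive.
Import GRing.Theory.
Local Open Scope ring_scope.

(* Indices are 0-based: z_{k+1} is 'X_k with k : 'I_n. *)

(* M(m2,m1,n): sums over N-tuples (N = m1+m2+1) of pairwise distinct
   indices, encoded as injective finite functions 'I_N -> 'I_n. *)
Definition Mpoly (R : comRingType) (m2 m1 n : nat) : {mpoly R[n]} :=
  \sum_(b : {ffun 'I_(m1 + m2 + 1) -> 'I_n} | injectiveb b)
     \prod_(h < m1 + m2 + 1)
        'X_(b h) ^+ (if (h < m2)%N then 2 else if (h < m2 + m1)%N then 1 else 0)%N
  - \sum_(b : {ffun 'I_(m1 + m2 + 1) -> 'I_n} | injectiveb b)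
     \prod_(h < m1 + m2 + 1)
        'X_(b h) ^+ (if (h < m2 - 1)%N then 2 else 1)%N.

Definition monomial_inc (R : comRingType) (n : nat) (d : seq nat) (i j : 'I_n)
    : {mpoly R[n]} :=
  \sum_(b : {ffun 'I_(size d) -> 'I_n} |
          injectiveb b && [forall h, (b h != i) && (b h != j)])
     \prod_(h < size d) 'X_(b h) ^+ nth 0%N d h.

Definition dseq (m2 m1 : nat) : seq nat := nseq (m2 - 1) 2%N ++ nseq m1 1%N.

From HB Require Import structures.
From mathcomp Require Import all_boot all_order all_algebra.
From mathcomp Require Import mpoly.
From mathcomp Require Import ring zify.
Import GRing.Theory.
Local Open Scope ring_scope.

(* Fix the images
   x = b_N and y = b_{m2}: they carry the exponents (0, 2) in the first sum and
   (1, 1) in the second, and what remains is, in both sums, the sum over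
   injective maps avoiding {x, y} with exponents d, i.e. monomial_inc(d, x, y).
   Hence M = sum_{x <> y} monomial_inc(d,x,y) (z_y^2 - z_y z_x), and pairing
   (x,y) with (y,x) turns z_y^2 - z_y z_x into (z_x - z_y)^2. *)

Definition ffun_insert {T : Type} {K : nat} (k : 'I_K.+1) (f : {ffun 'I_K -> T})
    (x : T) : {ffun 'I_K.+1 -> T} :=
  [ffun i => if unlift k i is Some j then f j else x].

Lemma ffun_insert_lift {T K} k f x j : @ffun_insert T K k f x (lift k j) = f j.
Proof. by rewrite ffunE liftK. Qed.

Lemma ffun_insert_pivot {T K} k f x : @ffun_insert T K k f x k = x.
Proof. by rewrite ffunE unlift_none. Qed.

Lemma ffun_insert_injective_avoid (T : finType) K k f x (A : {set T}) :
  x \notin A ->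
  (injectiveb (@ffun_insert T K k f x) && [forall h, ffun_insert k f x h \notin A])
  = (injectiveb f && [forall h, f h \notin x |: A]).
Proof.
move=> xNA; apply/idP/idP.
- case/andP=> /injectiveP inj_g /forallP gNA; apply/andP; split.
  + apply/injectiveP=> j1 j2 eq_f; apply: (@lift_inj _ k); apply: inj_g.
    by rewrite !ffun_insert_lift.
  + apply/forallP=> j; rewrite in_setU1 negb_or -(ffun_insert_lift k f x) gNA andbT.
    apply: contraNN (neq_lift k j) => /eqP g_eq.
    by have := inj_g k (lift k j); rewrite ffun_insert_pivot g_eq => /(_ erefl)/eqP.
- case/andP=> /injectiveP inj_f /forallP fNxA; apply/andP; split.
  + apply/injectiveP=> i1 i2.
    case: (unliftP k i1)=> [j1|] ->; case: (unliftP k i2)=> [j2|] ->;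
      rewrite ?ffun_insert_lift ?ffun_insert_pivot //.
    * by move/inj_f->.
    * by move=> fx; have := fNxA j1; rewrite fx setU11.
    * by move=> fx; have := fNxA j2; rewrite -fx setU11.
  + apply/forallP=> i; case: (unliftP k i)=> [j|] ->;
      rewrite ?ffun_insert_lift ?ffun_insert_pivot //.
    by have := fNxA j; rewrite in_setU1 negb_or => /andP[].
Qed.

Lemma sum_ordered_pairs {V : nmodType} {m} (F : 'I_m -> 'I_m -> V) :
  \sum_x \sum_(y | y != x) F y x
  = \sum_(i < m) \sum_(j < m | (i < j)%N) (F i j + F j i).
Proof.
under eq_bigr => x _ do rewrite (bigID (fun y : 'I_m => (y < x)%N)).
under [RHS]eq_bigr => i _ do rewrite big_split.
rewrite !big_split /=; congr (_ + _).
  rewrite (exchange_big_dep xpredT) //=; apply: eq_bigr => i _.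
  by apply: eq_bigl => j; rewrite -val_eqE /=; apply/andP/idP=> [[]|] //; lia.
apply: eq_bigr => i _; apply: eq_bigl => j; rewrite -val_eqE /=.
by apply/andP/idP=> [[]|]; lia.
Qed.

Lemma sum_ordered_pairs_sqr {V : comPzRingType} {m} (F : 'I_m -> 'I_m -> V)
    (z : 'I_m -> V) :
  (forall i j, F i j = F j i) ->
  \sum_x \sum_(y | y != x) F y x * (z y ^+ 2 - z y * z x)
  = \sum_(i < m) \sum_(j < m | (i < j)%N) F i j * (z i - z j) ^+ 2.
Proof.
move=> F_sym; rewrite sum_ordered_pairs; apply: eq_bigr => i _.
by apply: eq_bigr => j _; rewrite (F_sym j i); ring.
Qed.

Section DistinctMonomialSums.
Context {R : comNzRingType} {n : nat}.

Definition distinct_msum K (e : nat -> nat) (A : {set 'I_n}) : {mpoly R[n]} :=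
  \sum_(b : {ffun 'I_K -> 'I_n} | injectiveb b && [forall h, b h \notin A])
     \prod_(h < K) 'X_(b h) ^+ e h.

Lemma eq_distinct_msum {K e e'} A :
  (forall h, (h < K)%N -> e h = e' h) ->
  distinct_msum K e A = distinct_msum K e' A.
Proof.
by move=> eq_e; apply: eq_bigr => b _; apply: eq_bigr => h _; rewrite eq_e.
Qed.

Lemma distinct_msum_set0 K e :
  distinct_msum K e set0
  = \sum_(b : {ffun 'I_K -> 'I_n} | injectiveb b) \prod_(h < K) 'X_(b h) ^+ e h.
Proof.
apply: eq_bigl => b; rewrite (_ : [forall h, _] = true) ?andbT //.
by apply/forallP=> h; rewrite in_set0.
Qed.

Lemma distinct_msum_peel {K} (k : 'I_K.+1) e A :
  distinct_msum K.+1 e A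
  = \sum_(x | x \notin A) distinct_msum K (e \o bump k) (x |: A) * 'X_x ^+ e k.
Proof.
rewrite /distinct_msum.
rewrite (partition_big (fun b : {ffun _ -> _} => b k) (fun x => x \notin A)) /=;
  last by move=> b /andP[_ /forallP]; apply.
apply: eq_bigr => x xNA; rewrite mulr_suml.
rewrite (reindex_onto (fun f => ffun_insert k f x) (fun b => [ffun j => b (lift k j)]));
  last first.
  move=> b /andP[_ /eqP bk]; apply/ffunP=> i; rewrite ffunE.
  by case: (unliftP k i)=> [j|] ->; rewrite ?liftK ?unlift_none ?ffunE.
apply: eq_big => [f|f _].
  rewrite ffun_insert_injective_avoid // ffun_insert_pivot eqxx andbT.
  by rewrite (_ : _ == f) ?andbT //; apply/eqP/ffunP=> j; rewrite ffunE ffun_insert_lift.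
rewrite (bigD1_ord k) //= ffun_insert_pivot mulrC; congr (_ * _).
by apply: eq_bigr => j _; rewrite ffun_insert_lift.
Qed.

Lemma distinct_msum_ordered_pairs {L} k {e} e' : (k <= L)%N ->
  (forall h, (h < L)%N -> e (bump k h) = e' h) ->
  distinct_msum L.+2 e set0
  = \sum_x \sum_(y | y != x)
      distinct_msum L e' [set y; x] * 'X_y ^+ e k * 'X_x ^+ e L.+1.
Proof.
move=> le_kL eq_e; rewrite (distinct_msum_peel ord_max).
apply: eq_big => [x | x _]; first by rewrite in_set0.
rewrite (@eq_distinct_msum _ _ e) => [|h lt_hL]; last by rewrite /= /bump leqNgt lt_hL.
rewrite (distinct_msum_peel (Ordinal (le_kL : (k < L.+1)%N))) mulr_suml.
apply: eq_big => [y | y _]; first by rewrite setU0 in_set1.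
by rewrite setU0 (eq_distinct_msum _ eq_e).
Qed.

Lemma monomial_inc_distinct_msum {L} {d : seq nat} {i j : 'I_n} : size d = L ->
  monomial_inc R d i j = distinct_msum L (nth 0%N d) [set i; j].
Proof.
move=> <-; apply: eq_bigl => b; congr (_ && _); apply: eq_forallb => h.
by rewrite !inE negb_or.
Qed.

Lemma monomial_inc_sym (d : seq nat) (i j : 'I_n) :
  monomial_inc R d i j = monomial_inc R d j i.
Proof. by apply: eq_bigl => b; congr (_ && _); apply: eq_forallb => h; rewrite andbC. Qed.

End DistinctMonomialSums.

Definition Mexp_plus m2 m1 h :=
  if (h < m2)%N then 2%N else if (h < m2 + m1)%N then 1%N else 0%N.
Definition Mexp_minus m2 h := if (h < m2 - 1)%N then 2%N else 1%N.

Lemma Mpoly_distinct_msum (R : comNzRingType) m2 m1 n :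
  Mpoly R m2 m1 n = distinct_msum (m1 + m2 + 1) (Mexp_plus m2 m1) set0
                    - distinct_msum (m1 + m2 + 1) (Mexp_minus m2) set0.
Proof. by rewrite !distinct_msum_set0. Qed.

Lemma size_dseq m2 m1 : size (dseq m2 m1) = (m2 - 1 + m1)%N.
Proof. by rewrite size_cat !size_nseq. Qed.

Lemma nth_dseq m2 m1 h :
  (h < m2 - 1 + m1)%N -> nth 0%N (dseq m2 m1) h = Mexp_minus m2 h.
Proof.
move=> lt_h; rewrite nth_cat size_nseq !nth_nseq /Mexp_minus.
by case: ifP => // ge_h; rewrite ifT //; lia.
Qed.

Lemma Mexp_plus_bump m2 m1 h : (0 < m2)%N -> (h < m2 - 1 + m1)%N ->
  Mexp_plus m2 m1 (bump (m2 - 1) h) = Mexp_minus m2 h.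
Proof.
move=> m2_gt0 lt_h; rewrite /Mexp_plus /Mexp_minus /bump.
by case: (leqP (m2 - 1) h) => /= le; rewrite ?addn1 ?addn0; repeat case: ifP; lia.
Qed.

Lemma Mexp_plus_pivot m2 m1 : (0 < m2)%N -> Mexp_plus m2 m1 (m2 - 1) = 2%N.
Proof. by move=> m2_gt0; rewrite /Mexp_plus ifT //; lia. Qed.

Lemma Mexp_plus_last m2 m1 : (0 < m2)%N -> Mexp_plus m2 m1 (m2 - 1 + m1).+1 = 0%N.
Proof. by move=> m2_gt0; rewrite /Mexp_plus !ifF //; lia. Qed.

Lemma Mexp_minus_tail m2 h : (m2 - 1 <= h)%N -> Mexp_minus m2 h = 1%N.
Proof. by move=> le_h; rewrite /Mexp_minus ifF //; lia. Qed.

Theorem lemma3p7 (R : comRingType) (n m2 m1 : nat) :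
  (2 <= n)%N -> (1 <= m2)%N ->
  Mpoly R m2 m1 n =
  \sum_(i < n) \sum_(j < n | (i < j)%N)
     monomial_inc R (dseq m2 m1) i j * ('X_i - 'X_j) ^+ 2.
Proof.
(* The identity holds for every n. *)
move=> _ m2_gt0; set d := dseq m2 m1; set L := (m2 - 1 + m1)%N.
have size_d : size d = L by exact: size_dseq.
have le_L : (m2 - 1 <= L)%N by exact: leq_addr.
rewrite -(sum_ordered_pairs_sqr _ (fun i => 'X_i) (monomial_inc_sym (R := R) d)).
rewrite Mpoly_distinct_msum (_ : (m1 + m2 + 1 = L.+2)%N); last by rewrite /L; lia.
rewrite (distinct_msum_ordered_pairs _ (nth 0%N d) le_L);
  last by move=> h lt_hL; rewrite nth_dseq // Mexp_plus_bump.
rewrite (distinct_msum_ordered_pairs _ (nth 0%N d) (leqnn L));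
  last by move=> h lt_hL; rewrite nth_dseq // /bump leqNgt lt_hL.
rewrite -sumrB; apply: eq_bigr => x _; rewrite -sumrB; apply: eq_bigr => y _.
rewrite (monomial_inc_distinct_msum size_d).
rewrite Mexp_plus_pivot // Mexp_plus_last // !Mexp_minus_tail ?le_L ?(leqW le_L) //.
ring.
Qed.
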